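(* Let $m\ge1$ and $A=(a_0,\ldots,a_m)$ real with $a_0,a_m\ne0$. For every $x\in[-1,1]$ and every $\varepsilon>0$ there exists $n_0$ such that for every $n>n_0$ the polynomial $T_{n,A}$ has a root $\xi$ with $|x-\xi|<\varepsilon$.
   Context: $T_k$ denotes the Chebyshev polynomial of the first kind, $T_k(\cos\theta)=\cos k\theta$. For $A=(a_0,\ldots,a_m)$ real with $a_0,a_m\ne0$ and $n\ge m$, $T_{n,A}(x)=\sum_{i=0}^m a_iT_{n-i}(x)$. *)

From Stdlib Require Import Reals.
Open Scope R_scope.

(* Chebyshev polynomial of the first kind, as a polynomial function on R,
   via the standard recurrence T_0 = 1, T_1 = x, T_{k+2} = 2x T_{k+1} - T_k
   (so that T_k(cos t) = cos (k t)). *)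
Fixpoint cheb (k : nat) (x : R) {struct k} : R :=
  match k with
  | O => 1
  | S k' =>
      match k' with
      | O => x
      | S k'' => 2 * x * cheb k' x - cheb k'' x
      end
  end.

(* T_{n,A}(x) = sum_{i=0}^m a_i T_{n-i}(x), with A = (a_0,...,a_m) given as
   a : nat -> R (only a 0, ..., a m matter). Meaningful for n >= m. *)
Definition chebA (a : nat -> R) (m n : nat) (x : R) : R :=
  sum_f_R0 (fun i => a i * cheb (n - i) x) m.

From Stdlib Require Import Reals Lra Lia.
Open Scope R_scope.

(* Write x = cos th.  Since T_k(cos t) = cos (k t), the addition
   formula for cos (n t - i t) gives
     T_{n,A}(cos t) = P(t) cos (n t) + Q(t) sin (n t),
   with the trigonometric polynomials P(t) = sum a_i cos (i t) and
   Q(t) = sum a_i sin (i t), which do not depend on n.  Near th, such a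
   "modulated wave" is uniformly close to the pure sinusoid
   u(t) = P(th) cos (n t) + Q(th) sin (n t) of amplitude sqrt (P(th)^2 + Q(th)^2).
   The sinusoid changes sign over every half period pi/n, and within a quarter
   period of th it reaches at least 1/sqrt 2 of its amplitude; there the error
   is too small to spoil the sign change, so by the intermediate value theorem
   the wave vanishes within 3 pi / (2 n) of th.  (If P(th) = Q(th) = 0, th is
   itself a zero for every n.)  Mapping back by cos, which is continuous,
   yields roots of T_{n,A} close to x. *)

(* Chebyshev identity, proved together with the next index to follow the
   two-step recurrence. *)
Lemma cheb_cos_pair (t : R) (k : nat) :
  cheb k (cos t) = cos (INR k * t) /\ cheb (S k) (cos t) = cos (INR (S k) * t).
Proof.
  induction k as [|k [IHk IHSk]].
  - simpl. rewrite Rmult_0_l, cos_0, Rmult_1_l. split; reflexivity.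
  - split; [exact IHSk|].
    change (cheb (S (S k)) (cos t))
      with (2 * cos t * cheb (S k) (cos t) - cheb k (cos t)).
    rewrite IHk, IHSk.
    replace (INR (S (S k)) * t) with ((INR k * t + t) + t) by (rewrite !S_INR; ring).
    replace (INR (S k) * t) with (INR k * t + t) by (rewrite S_INR; ring).
    replace (cos (INR k * t)) with (cos ((INR k * t + t) - t)) by (f_equal; ring).
    rewrite (cos_plus (INR k * t + t) t), (cos_minus (INR k * t + t) t). ring.
Qed.

Lemma cheb_cos (t : R) (k : nat) : cheb k (cos t) = cos (INR k * t).
Proof. apply cheb_cos_pair. Qed.

Definition sinusoid (c s w t : R) : R := c * cos (w * t) + s * sin (w * t).

Definition wave (C S : R -> R) (w t : R) : R := sinusoid (C t) (S t) w t.

Definition cos_part (a : nat -> R) (m : nat) (t : R) : R :=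
  sum_f_R0 (fun i => a i * cos (INR i * t)) m.

Definition sin_part (a : nat -> R) (m : nat) (t : R) : R :=
  sum_f_R0 (fun i => a i * sin (INR i * t)) m.

Lemma chebA_cos (a : nat -> R) (m n : nat) (t : R) : (m <= n)%nat ->
  chebA a m n (cos t) = wave (cos_part a m) (sin_part a m) (INR n) t.
Proof.
  intros Hmn. unfold chebA, wave, sinusoid, cos_part, sin_part.
  assert (Hterm : forall i, (i <= n)%nat ->
    a i * cheb (n - i) (cos t) = a i * cos (INR i * t) * cos (INR n * t)
                                 + a i * sin (INR i * t) * sin (INR n * t)).
  { intros i Hi. rewrite cheb_cos, minus_INR by exact Hi.
    replace ((INR n - INR i) * t) with (INR n * t - INR i * t) by ring.
    rewrite cos_minus. ring. }
  induction m as [|m IH]; cbn [sum_f_R0].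
  - rewrite Hterm by lia. ring.
  - rewrite IH, Hterm by lia. ring.
Qed.

Lemma cos_part_continuous (a : nat -> R) (m : nat) : continuity (cos_part a m).
Proof.
  intros t. apply (continuity_pt_finite_SF (fun i u => a i * cos (INR i * u))).
  intros i _. assert (Hi : continuity (fun u => a i * cos (INR i * u))) by reg.
  apply Hi.
Qed.

Lemma sin_part_continuous (a : nat -> R) (m : nat) : continuity (sin_part a m).
Proof.
  intros t. apply (continuity_pt_finite_SF (fun i u => a i * sin (INR i * u))).
  intros i _. assert (Hi : continuity (fun u => a i * sin (INR i * u))) by reg.
  apply Hi.
Qed.

Lemma wave_continuous (C S : R -> R) (w : R) :
  continuity C -> continuity S -> continuity (wave C S w).
Proof. intros HC HS. unfold wave, sinusoid. reg. Qed.

(* Continuity in epsilon-delta form, without excluding the point itself. *)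
Lemma continuous_near (f : R -> R) (x0 e : R) : continuity_pt f x0 -> 0 < e ->
  exists d, 0 < d /\ forall t, Rabs (t - x0) < d -> Rabs (f t - f x0) < e.
Proof.
  intros Hf He. destruct (Hf e He) as [d [Hd Hclose]].
  exists d; split; [exact Hd|]. intros t Ht.
  destruct (Req_dec t x0) as [->|Hne].
  - rewrite Rminus_diag, Rabs_R0; exact He.
  - apply (Hclose t). split; [split; [exact I|auto]|exact Ht].
Qed.

Lemma sinusoid_half_period (c s w t : R) : 0 < w ->
  sinusoid c s w (t + PI / w) = - sinusoid c s w t.
Proof.
  intros Hw. unfold sinusoid.
  replace (w * (t + PI / w)) with (w * t + PI) by (field; lra).
  rewrite neg_cos, neg_sin. ring.
Qed.

(* Within a quarter period of any point, the square of a sinusoid reaches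
   half its squared amplitude: the squares at t and at t + pi/(2w) add up to
   c^2 + s^2. *)
Lemma sinusoid_large_point (c s w t0 : R) : 0 < w ->
  exists tau, Rabs (tau - t0) <= PI / (2 * w) /\
    c * c + s * s <= 2 * (sinusoid c s w tau * sinusoid c s w tau).
Proof.
  intros Hw.
  assert (Hquarter : sinusoid c s w t0 * sinusoid c s w t0
      + sinusoid c s w (t0 + PI / (2 * w)) * sinusoid c s w (t0 + PI / (2 * w))
      = c * c + s * s).
  { unfold sinusoid.
    replace (w * (t0 + PI / (2 * w))) with (w * t0 + PI / 2) by (field; lra).
    rewrite cos_plus, sin_plus, cos_PI2, sin_PI2.
    pose proof (sin2_cos2 (w * t0)) as Hpyth. unfold Rsqr in Hpyth. nra. }
  assert (Hq : 0 < PI / (2 * w)) by (pose proof PI_RGT_0; apply Rdiv_lt_0_compat; lra).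
  destruct (Rle_lt_dec (c * c + s * s) (2 * (sinusoid c s w t0 * sinusoid c s w t0)))
    as [Hbig|Hsmall].
  - exists t0. rewrite Rminus_diag, Rabs_R0. split; lra.
  - exists (t0 + PI / (2 * w)).
    replace (t0 + PI / (2 * w) - t0) with (PI / (2 * w)) by ring.
    rewrite Rabs_right by lra. split; lra.
Qed.

Lemma sinusoid_coef_close (c s c0 s0 w t : R) :
  Rabs (sinusoid c s w t - sinusoid c0 s0 w t) <= Rabs (c - c0) + Rabs (s - s0).
Proof.
  unfold sinusoid.
  replace (c * cos (w * t) + s * sin (w * t) - (c0 * cos (w * t) + s0 * sin (w * t)))
    with ((c - c0) * cos (w * t) + (s - s0) * sin (w * t)) by ring.
  eapply Rle_trans; [apply Rabs_triang|]. rewrite !Rabs_mult.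
  assert (Rabs (cos (w * t)) <= 1) by (apply Rabs_le; apply COS_bound).
  assert (Rabs (sin (w * t)) <= 1) by (apply Rabs_le; apply SIN_bound).
  pose proof (Rabs_pos (c - c0)). pose proof (Rabs_pos (s - s0)). nra.
Qed.

Lemma opposite_signs_near (p q v r : R) :
  Rabs (p - v) < r -> Rabs (q + v) < r -> r <= Rabs v -> p * q <= 0.
Proof.
  intros Hp Hq Hv. apply Rabs_def2 in Hp. apply Rabs_def2 in Hq.
  destruct (Rcase_abs v) as [Hneg|Hpos].
  - rewrite Rabs_left in Hv by exact Hneg.
    assert (p < 0) by lra. assert (0 < q) by lra. nra.
  - rewrite Rabs_right in Hv by exact Hpos.
    assert (0 < p) by lra. assert (q < 0) by lra. nra.
Qed.

Lemma half_period_small (d : R) : 0 < d ->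
  exists N : nat, forall n : nat, (N < n)%nat -> 0 < INR n /\ PI / INR n < d.
Proof.
  intros Hd. destruct (archimed_cor1 (d / 4)) as [N [HN HN0]]; [lra|].
  exists N. intros n Hn.
  assert (HN0' : 0 < INR N) by (apply lt_0_INR; lia).
  assert (HnN : INR N < INR n) by (apply lt_INR; lia).
  assert (Hinv : / INR n < / INR N) by (apply Rinv_lt_contravar; nra).
  assert (/ INR n > 0) by (apply Rinv_0_lt_compat; lra).
  split; [lra|]. unfold Rdiv. pose proof PI_4. pose proof PI_RGT_0. nra.
Qed.

(* A wave that stays within r of a sinusoid of squared amplitude at least
   2 r^2, on a neighbourhood of th wider than three quarter-periods on each
   side, vanishes in that neighbourhood: from a point of large sinusoid value
   near th, the wave changes sign over the next half period. *)
Lemma wave_zero_near_sinusoid (C S : R -> R) (c0 s0 w th r d : R) :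
  continuity C -> continuity S -> 0 < w -> 0 < r ->
  2 * (r * r) <= c0 * c0 + s0 * s0 -> 3 / 2 * (PI / w) < d ->
  (forall t, Rabs (t - th) < d -> Rabs (wave C S w t - sinusoid c0 s0 w t) < r) ->
  exists z, Rabs (z - th) < d /\ wave C S w z = 0.
Proof.
  intros HC HS Hw Hr Hamp2 Hh Hclose.
  set (h := PI / w) in *.
  destruct (sinusoid_large_point c0 s0 w th Hw) as [tau [Htau Hbig]].
  replace (PI / (2 * w)) with (h / 2) in Htau by (unfold h; field; lra).
  assert (Htau_bounds : - (h / 2) <= tau - th <= h / 2).
  { pose proof (Rle_abs (tau - th)). pose proof (Rle_abs (- (tau - th))).
    rewrite Rabs_Ropp in *. lra. }
  assert (Hamp : r <= Rabs (sinusoid c0 s0 w tau)).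
  { rewrite <- (Rabs_right r) by lra. apply Rsqr_le_abs_0. unfold Rsqr. nra. }
  assert (Hsign : wave C S w tau * wave C S w (tau + h) <= 0).
  { apply (opposite_signs_near _ _ (sinusoid c0 s0 w tau) r); [| |exact Hamp].
    - apply Hclose. lra.
    - replace (wave C S w (tau + h) + sinusoid c0 s0 w tau)
        with (wave C S w (tau + h) - sinusoid c0 s0 w (tau + h))
        by (unfold h; rewrite (sinusoid_half_period c0 s0 w tau Hw); ring).
      apply Hclose. apply Rabs_def1; lra. }
  destruct (IVT_cor (wave C S w) tau (tau + h)
    (wave_continuous C S w HC HS) ltac:(lra) Hsign) as [z [Hz Hzero]].
  exists z. split; [apply Rabs_def1; lra|exact Hzero].
Qed.

(* If both coefficients vanish at th, th itself is the zero; otherwise the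
   coefficients are frozen at th up to a quarter of the amplitude. *)
Lemma wave_zero_near (C S : R -> R) (th eta : R) :
  continuity C -> continuity S -> 0 < eta ->
  exists N : nat, forall n : nat, (N < n)%nat ->
    exists z, Rabs (z - th) < eta /\ wave C S (INR n) z = 0.
Proof.
  intros HC HS Heta.
  set (c0 := C th); set (s0 := S th); set (K := c0 * c0 + s0 * s0).
  destruct (Req_dec K 0) as [HK0|HK0].
  { exists 0%nat. intros n _. exists th. split.
    - rewrite Rminus_diag, Rabs_R0. exact Heta.
    - assert (Hc : c0 = 0) by (unfold K in HK0; nra).
      assert (Hs : s0 = 0) by (unfold K in HK0; nra).
      unfold wave, sinusoid. fold c0 s0. rewrite Hc, Hs. ring. }
  set (r := sqrt K / 2).
  assert (HK : 0 < K) by (unfold K in *; nra).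
  assert (Hr : 0 < r) by (unfold r; pose proof (sqrt_lt_R0 K HK); lra).
  assert (Hr2 : 4 * (r * r) = K) by (unfold r; pose proof (sqrt_sqrt K); lra).
  destruct (continuous_near C th (r / 2) (HC th)) as [d1 [Hd1 HC1]]; [lra|].
  destruct (continuous_near S th (r / 2) (HS th)) as [d2 [Hd2 HS2]]; [lra|].
  set (d := Rmin eta (Rmin d1 d2)).
  assert (Hd : 0 < d) by (unfold d; repeat apply Rmin_pos; assumption).
  assert (Hd_le : d <= eta /\ d <= d1 /\ d <= d2).
  { unfold d. repeat split; [apply Rmin_l| |];
      (eapply Rle_trans; [apply Rmin_r|]); [apply Rmin_l|apply Rmin_r]. }
  assert (Hclose : forall w t, Rabs (t - th) < d ->
    Rabs (wave C S w t - sinusoid c0 s0 w t) < r).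
  { intros w t Ht. eapply Rle_lt_trans; [apply sinusoid_coef_close|].
    pose proof (HC1 t ltac:(lra)). pose proof (HS2 t ltac:(lra)). unfold c0, s0. lra. }
  destruct (half_period_small (2 / 3 * d)) as [N HN]; [lra|].
  exists N. intros n Hn. destruct (HN n Hn) as [Hw Hh].
  destruct (wave_zero_near_sinusoid C S c0 s0 (INR n) th r d HC HS Hw Hr
    ltac:(fold K; lra) ltac:(lra) (Hclose (INR n))) as [z [Hz Hzero]].
  exists z. split; [lra|exact Hzero].
Qed.

Theorem theorem2p5 (m : nat) (a : nat -> R) :
  (1 <= m)%nat -> a 0%nat <> 0 -> a m <> 0 ->
  forall x : R, -1 <= x <= 1 ->
  forall eps : R, 0 < eps ->
  exists n0 : nat, forall n : nat, (n0 < n)%nat -> (m <= n)%nat ->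
    exists xi : R, Rabs (x - xi) < eps /\ chebA a m n xi = 0.
Proof.
  intros _ _ _ x Hx eps Heps.
  set (th := acos x).
  destruct (continuous_near cos th eps (continuity_cos th) Heps) as [d [Hd Hcos]].
  destruct (wave_zero_near (cos_part a m) (sin_part a m) th d
    (cos_part_continuous a m) (sin_part_continuous a m) Hd) as [N HN].
  exists N. intros n Hn Hmn.
  destruct (HN n Hn) as [z [Hz Hzero]].
  exists (cos z). split.
  - rewrite <- (cos_acos x Hx), Rabs_minus_sym. apply Hcos. exact Hz.
  - rewrite chebA_cos by exact Hmn. exact Hzero.
Qed.
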